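(* Let $\boldsymbol\varphi\in\mathcal{OB}$ and let $g_{\boldsymbol\varphi}$ be a product metric with associated component operators $\mathcal G_{\boldsymbol\varphi,j}:H^1_0(\mathcal D,\mathbb C)\to H^{-1}(\mathcal D,\mathbb C)$. Then $g_{\boldsymbol\varphi}$ is horizontally compatible with the $L$-metric at $\boldsymbol\varphi$, i.e. $\mathcal H^g_{\boldsymbol\varphi}=\mathcal H^L_{\boldsymbol\varphi}$, if and only if for every $j=1,\dots,p$ the function $i\varphi_j$ is an eigenfunction of $\mathcal G_{\boldsymbol\varphi,j}$ on $T_{\varphi_j}\mathcal S_{N_j}$ to a nonzero real eigenvalue, i.e. there is $\varsigma_j\in\mathbb R\setminus\{0\}$ with $\langle\mathcal G_{\boldsymbol\varphi,j}(i\varphi_j),z\rangle=\varsigma_j\,\mathrm{Re}\int_{\mathcal D}i\varphi_j\overline z\,dx$ for all $z\in T_{\varphi_j}\mathcal S_{N_j}$.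
   Context: $\mathcal D\subset\mathbb R^d$ bounded Lipschitz, $d\in\{2,3\}$; $H=[H^1_0(\mathcal D,\mathbb C)]^p$ real Hilbert space, $\langle\cdot,\cdot\rangle$ the real duality pairing between $H^{-1}$ and $H^1_0$. $N_j>0$; $\mathcal S_{N_j}=\{\varphi\in H^1_0(\mathcal D,\mathbb C):\int|\varphi|^2=N_j\}$, $T_{\varphi}\mathcal S_{N_j}=\{z:\mathrm{Re}\int z\overline\varphi=0\}$; $\mathcal{OB}=\mathcal S_{N_1}\times\dots\times\mathcal S_{N_p}$, $T_{\boldsymbol\varphi}\mathcal{OB}=\prod_jT_{\varphi_j}\mathcal S_{N_j}$. Vertical space $\mathcal V_{\boldsymbol\varphi}=\{i\boldsymbol\varphi\Sigma:\Sigma\text{ real diagonal}\}=\{(i\varphi_1\sigma_1,\dots,i\varphi_p\sigma_p):\sigma_j\in\mathbb R\}$. For a Riemannian metric $g_{\boldsymbol\varphi}$ (an inner product on $T_{\boldsymbol\varphi}\mathcal{OB}$), $\mathcal H^g_{\boldsymbol\varphi}=\{\boldsymbol\xi\in T_{\boldsymbol\varphi}\mathcal{OB}:g_{\boldsymbol\varphi}(\boldsymbol\xi,\boldsymbol\nu)=0\ \forall\boldsymbol\nu\in\mathcal V_{\boldsymbol\varphi}\}$; for the $L$-metric $g_L(\mathbf y,\mathbf z)=\sum_j\mathrm{Re}\int y_j\overline{z_j}$ this is $\mathcal H^L_{\boldsymbol\varphi}=\{\boldsymbol\xi\in H:\int\varphi_j\overline{\xi_j}\,dx=0\in\mathbb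 C\ \forall j\}$. A product metric here is one defined on all of $H$ of the form $g_{\boldsymbol\varphi}(\mathbf y,\mathbf z)=\sum_j\langle\mathcal G_{\boldsymbol\varphi,j}y_j,z_j\rangle$ with linear $\mathcal G_{\boldsymbol\varphi,j}:H^1_0(\mathcal D,\mathbb C)\to H^{-1}(\mathcal D,\mathbb C)$. *)

From mathcomp Require Import all_boot all_algebra.
From mathcomp Require Import all_classical all_reals all_analysis.
From mathcomp Require Import complex.
Import GRing.Theory Num.Theory numFieldNormedType.Exports.

Set Implicit Arguments.
Unset Strict Implicit.
Unset Printing Implicit Defensive.

Local Open Scope ring_scope.
Local Open Scope classical_set_scope.

(* Euclidean space R^d (d = 2 or d = 3) with its Lebesgue measure.          *)
Record euclid (R : realType) := Euclid {
  sV  : normedModType R;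
  sdM : measure_display;
  sM  : measurableType sdM;
  smu : {measure set sM -> \bar R};
  stoV : sM -> sV;                       (* identity of the carrier *)
  sdim1 : nat;                           (* d - 1 *)
  sbasis : 'I_sdim1.+1 -> sV;
  sdot : sV -> sV -> R
}.

Section Spaces.
Variable R : realType.

Definition mu2 : {measure set _ -> \bar R} :=
  (@lebesgue_measure R \x @lebesgue_measure R)%E.
Definition mu3 : {measure set _ -> \bar R} :=
  ((@lebesgue_measure R \x @lebesgue_measure R) \x @lebesgue_measure R)%E.

Definition E2 : euclid R :=
  @Euclid R (R * R)%type _ _ mu2 (fun x => x) 1
    (fun i => if val i == 0%N then (1, 0) else (0, 1))
    (fun x y => x.1 * y.1 + x.2 * y.2).

Definition E3 : euclid R :=
  @Euclid R (R * R * R)%type _ _ mu3 (fun x => x) 2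
    (fun i => if val i == 0%N then (1, 0, 0)
              else if val i == 1%N then (0, 1, 0) else (0, 0, 1))
    (fun x y => x.1.1 * y.1.1 + x.1.2 * y.1.2 + x.2 * y.2).

Definition Rd (d : nat) : euclid R := if d == 3%N then E3 else E2.

End Spaces.

Section Sobolev.
Variables (R : realType) (E : euclid R).

Local Notation V := (@sV R E).
Local Notation M := (@sM R E).
Local Notation mu := (@smu R E).
Local Notation toV := (@stoV R E).
Local Notation d1 := (@sdim1 R E).
Local Notation e := (@sbasis R E).
Local Notation dot := (@sdot R E).

Definition abs2 (z : R[i]) : R := complex.Re z ^+ 2 + complex.Im z ^+ 2.

Definition euclid_norm (x : V) : R := Num.sqrt (dot x x).

(* D is a Lipschitz domain: at every boundary point, in suitable rotated    *)
(* coordinates (an orthonormal frame b, last axis b_d) and inside a ball,   *)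
(* D is the region strictly above the graph of a Lipschitz function h of    *)
(* the first d-1 coordinates.                                               *)
Definition lipschitz_boundary (D : set V) : Prop :=
  forall x, closure D x -> ~ D x ->
  exists (r : R) (b : 'I_d1.+1 -> V) (h : V -> R) (L : R),
    0 < r /\
    (forall i j, dot (b i) (b j) = (i == j)%:R) /\
    (forall y, h y = h (y - dot y (b ord_max) *: b ord_max)) /\
    (forall y z, `|h y - h z| <= L * euclid_norm (y - z)) /\
    (forall y, euclid_norm (y - x) < r ->
       (D y <-> h (y - x) < dot (y - x) (b ord_max))).

Definition bounded_lipschitz_domain (D : set V) : Prop :=
  open D /\ connected D /\ D !=set0 /\ bounded_set D /\ lipschitz_boundary D.

Definition onD (D : set V) : set M := toV @^-1` D.

Definition rint (D : set V) (f : V -> R) : R :=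
  Rintegral mu (onD D) (fun x => f (toV x)).

Definition eint (D : set V) (f : V -> R) : \bar R :=
  (\int[mu]_(x in onD D) (f (toV x))%:E)%E.

Definition cint (D : set V) (f : V -> R[i]) : R[i] :=
  Complex (rint D (fun x => complex.Re (f x))) (rint D (fun x => complex.Im (f x))).

Definition pder (l : seq 'I_d1.+1) (f : V -> R) : V -> R :=
  foldr (fun k g => 'D_(e k) g) f l.

Definition smooth (f : V -> R) : Prop :=
  forall l, continuous (pder l f) /\ (forall k x, derivable (pder l f) x (e k)).

Definition compact_support_in (D : set V) (f : V -> R[i]) : Prop :=
  compact (closure [set x | f x != 0]) /\ closure [set x | f x != 0] `<=` D.

Definition rtest (D : set V) (f : V -> R) : Prop :=
  smooth f /\ compact_support_in D (fun x => (f x)%:C%C).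

Definition ctest (D : set V) (f : V -> R[i]) : Prop :=
  smooth (fun x => complex.Re (f x)) /\ smooth (fun x => complex.Im (f x)) /\
  compact_support_in D f.

Definition cpder (k : 'I_d1.+1) (f : V -> R[i]) : V -> R[i] :=
  fun x => Complex ('D_(e k) (fun y => complex.Re (f y)) x) ('D_(e k) (fun y => complex.Im (f y)) x).

Definition L2 (D : set V) (u : V -> R[i]) : Prop :=
  measurable_fun (onD D) (fun x => complex.Re (u (toV x))) /\
  measurable_fun (onD D) (fun x => complex.Im (u (toV x))) /\
  (eint D (fun x => abs2 (u x)) < +oo)%E.

Definition weak_partial (D : set V) (k : 'I_d1.+1) (u w : V -> R[i]) : Prop :=
  forall psi, rtest D psi ->
    rint D (fun x => complex.Re (u x) * 'D_(e k) psi x) = - rint D (fun x => complex.Re (w x) * psi x) /\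
    rint D (fun x => complex.Im (u x) * 'D_(e k) psi x) = - rint D (fun x => complex.Im (w x) * psi x).

Definition weak_grad (D : set V) (u : V -> R[i]) (w : 'I_d1.+1 -> V -> R[i]) : Prop :=
  forall k, L2 D (w k) /\ weak_partial D k u (w k).

Definition H1dist2 (D : set V) (u : V -> R[i]) (w : 'I_d1.+1 -> V -> R[i])
    (v : V -> R[i]) (wv : 'I_d1.+1 -> V -> R[i]) : \bar R :=
  (eint D (fun x => abs2 (u x - v x)%R) +
   \sum_(k < d1.+1) eint D (fun x => abs2 (w k x - wv k x)%R))%E.

Definition H1norm2 (D : set V) (u : V -> R[i]) (w : 'I_d1.+1 -> V -> R[i]) : \bar R :=
  H1dist2 D u w (fun=> 0) (fun _ _ => 0).

Definition H10 (D : set V) (u : V -> R[i]) : Prop :=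
  L2 D u /\
  exists w, weak_grad D u w /\
  exists psi : nat -> V -> R[i], (forall n, ctest D (psi n)) /\
    ((fun n => H1dist2 D (psi n) (fun k => cpder k (psi n)) u w) @ \oo --> 0%E).

Definition ae_eq (D : set V) (u v : V -> R[i]) : Prop :=
  {ae mu, forall x, onD D x -> u (toV x) = v (toV x)}.

Section Manifold.
Variables (D : set V) (p : nat).

Definition L2re (y z : V -> R[i]) : R := complex.Re (cint D (fun x => y x * (z x)^*)).

Definition imul (u : V -> R[i]) : V -> R[i] := fun x => 'i * u x.

Definition inH (y : 'I_p -> V -> R[i]) : Prop := forall j, H10 D (y j).

Definition sphere (N : R) (phi : V -> R[i]) : Prop :=
  H10 D phi /\ rint D (fun x => abs2 (phi x)) = N.

Definition tangent_sphere (phi z : V -> R[i]) : Prop :=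
  H10 D z /\ complex.Re (cint D (fun x => z x * (phi x)^*)) = 0.

Definition oblique (N : 'I_p -> R) (phi : 'I_p -> V -> R[i]) : Prop :=
  forall j, sphere (N j) (phi j).

Definition tangentOB (phi xi : 'I_p -> V -> R[i]) : Prop :=
  forall j, tangent_sphere (phi j) (xi j).

Definition vertical (phi nu : 'I_p -> V -> R[i]) : Prop :=
  exists sigma : 'I_p -> R, nu = fun j x => 'i * phi j x * (sigma j)%:C%C.

(* product metric g(y, z) = sum_j < G_j y_j, z_j >, where
   Gpair j y z stands for the real duality pairing < G_{phi,j} y, z > *)
Definition prod_metric (Gpair : 'I_p -> (V -> R[i]) -> (V -> R[i]) -> R)
    (y z : 'I_p -> V -> R[i]) : R :=
  \sum_(j < p) Gpair j (y j) (z j).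

Definition horizontal (g : ('I_p -> V -> R[i]) -> ('I_p -> V -> R[i]) -> R)
    (phi : 'I_p -> V -> R[i]) : set ('I_p -> V -> R[i]) :=
  [set xi | tangentOB phi xi /\ forall nu, vertical phi nu -> g xi nu = 0].

Definition horizontalL (phi : 'I_p -> V -> R[i]) : set ('I_p -> V -> R[i]) :=
  [set xi | inH xi /\ forall j, cint D (fun x => phi j x * (xi j x)^*) = 0].

(* G : H^1_0 -> H^{-1} linear (over R), given through its pairing
   b(y, z) = < G y, z >:  well defined on a.e.-classes, linear in y, and
   for each y the map z |-> < G y, z > is R-linear and H^1-bounded. *)
Definition op_H10_Hm1 (b : (V -> R[i]) -> (V -> R[i]) -> R) : Prop :=
  (forall y y' z, H10 D y -> H10 D y' -> H10 D z -> ae_eq D y y' -> b y z = b y' z) /\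
  (forall (a : R) y y' z, H10 D y -> H10 D y' -> H10 D z ->
     b (fun x => (a%:C)%C * y x + y' x) z = a * b y z + b y' z) /\
  (forall y, H10 D y ->
     (forall (a : R) z z', H10 D z -> H10 D z' ->
        b y (fun x => (a%:C)%C * z x + z' x) = a * b y z + b y z') /\
     exists C : R, forall z w, H10 D z -> weak_grad D z w ->
        (((b y z) ^+ 2)%:E <= C%:E * H1norm2 D z w)%E).

Definition riemannian_at (g : ('I_p -> V -> R[i]) -> ('I_p -> V -> R[i]) -> R)
    (phi : 'I_p -> V -> R[i]) : Prop :=
  (forall xi eta, tangentOB phi xi -> tangentOB phi eta -> g xi eta = g eta xi) /\
  (forall xi, tangentOB phi xi -> ~ (forall j, ae_eq D (xi j) (fun=> 0)) ->
     0 < g xi xi).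

End Manifold.
End Sobolev.

From mathcomp Require Import all_boot all_algebra.
From mathcomp Require Import all_classical all_reals all_analysis.
From mathcomp Require Import complex.
From mathcomp Require Import ring lra measurable_realfun.
Import GRing.Theory Num.Theory numFieldNormedType.Exports.
Import order.Order.TTheory.
Set Implicit Arguments.
Unset Strict Implicit.
Unset Printing Implicit Defensive.
Local Open Scope ring_scope.
Local Open Scope classical_set_scope.

Local Notation Re := complex.Re.
Local Notation Im := complex.Im.

(* Write psi_j = i phi_j.  By symmetry of G_j on the tangent space T_j of the
   j-th sphere, g(xi, i phi Sigma) = sum_j sigma_j <G_j psi_j, xi_j>, so the
   g-horizontal vectors are the tangent xi with <G_j psi_j, xi_j> = 0 for all j.
   Since int phi_j conj(xi_j) = 0 splits into the tangency condition and
   Re int psi_j conj(xi_j) = 0, the L-horizontal vectors are the tangent xi with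
   (psi_j, xi_j)_L = 0 for all j.  Testing with vectors supported in a single
   component, the two spaces agree iff, on each T_j, the linear functionals
   <G_j psi_j, .> and (psi_j, .)_L have the same kernel; as psi_j is in T_j with
   (psi_j, psi_j)_L = N_j <> 0, this means they are proportional with a nonzero
   factor.  The analysis needed is that H^1_0 is a complex vector space and the
   L^2 pairing is bilinear on it, which holds as D is open and bounded. *)

Section MeasurableOpen.
Variables (T : topologicalType) (d : measure_display) (M : measurableType d).
Variable f : M -> T.

Definition measurable_base (I : countType) (B : I -> set T) :=
  (forall i, measurable (f @^-1` B i)) /\
  (forall x A, nbhs x A -> exists i, B i x /\ B i `<=` A).

Definition open_measurable_map := forall A, open A -> measurable (f @^-1` A).

(* An open set is the countable union of the basic sets it contains. *)
Lemma open_measurable_of_base (I : countType) (B : I -> set T) :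
  measurable_base B -> open_measurable_map.
Proof.
move=> [mB baseB] A oA.
have -> : f @^-1` A =
    \bigcup_i (if pselect (B i `<=` A) is left _ then f @^-1` B i else set0).
  apply/seteqP; split=> [x Ax|x [i _]]; last by case: pselect => // BA /BA.
  have [i [Bix BA]] := baseB _ _ (open_nbhs_nbhs (conj oA Ax)).
  by exists i => //; case: pselect.
apply: countable_bigcupT_measurable; first exact: countableP.
by move=> i; case: pselect.
Qed.

End MeasurableOpen.

Lemma measurable_base_rat_itv (R : realType) :
  measurable_base (fun x : measurableTypeR R => x : R)
    (fun q : rat * rat => `]ratr q.1, ratr q.2[%classic).
Proof.
split=> [q|x A /nbhs_ballP[e e0 eA]]; first exact: measurable_itv.
have [a] : exists q : rat, ratr q \in `]x - e, x[%R.
  by apply: rat_in_itvoo; rewrite ltrBlDr ltrDl.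
rewrite in_itv /= => /andP[xa ax].
have [b] : exists q : rat, ratr q \in `]x, x + e[%R.
  by apply: rat_in_itvoo; rewrite ltrDl.
rewrite in_itv /= => /andP[xb bx].
exists (a, b); split=> [|y]; first by rewrite /= in_itv /= ax xb.
rewrite /= in_itv /= => /andP[ay yb]; apply: eA.
rewrite /ball /= ltr_distlC; apply/andP; split; lra.
Qed.

Lemma measurable_base_prod (T1 T2 : topologicalType) d1 d2
    (M1 : measurableType d1) (M2 : measurableType d2)
    (f1 : M1 -> T1) (f2 : M2 -> T2) (I1 I2 : countType)
    (B1 : I1 -> set T1) (B2 : I2 -> set T2) :
  measurable_base f1 B1 -> measurable_base f2 B2 ->
  measurable_base (fun x : M1 * M2 => (f1 x.1, f2 x.2) : T1 * T2)
    (fun i => B1 i.1 `*` B2 i.2).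
Proof.
move=> [m1 b1] [m2 b2]; split=> [[i j]|x A [[U V] /= [xU xV] UVA]].
  exact: (measurableX (m1 i) (m2 j)).
have [i [Bix BU]] := b1 _ _ xU; have [j [Bjx BV]] := b2 _ _ xV.
by exists (i, j); split=> // y [/BU yU /BV yV]; apply: UVA.
Qed.

Definition finite_measure_balls (R : realType) (T : normedModType R) d
    (M : measurableType d) (f : M -> T) (m : {measure set M -> \bar R}) :=
  forall r : R, exists K : set T, [/\ compact K, [set x | `|x| <= r] `<=` K,
    measurable (f @^-1` K) & (m (f @^-1` K) < +oo)%E].

Lemma finite_measure_balls_R (R : realType) :
  finite_measure_balls (fun x : measurableTypeR R => x : R) lebesgue_measure.
Proof.
move=> r; exists `[- r, r]; split.
- exact: segment_compact.
- by move=> x /=; rewrite in_itv /= -ler_norml.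
- exact: measurable_itv.
- by rewrite [X in (X < _)%E]lebesgue_measure_itv; case: ifP => // _; rewrite -EFinD ltry.
Qed.

Lemma finite_measure_balls_prodR (R : realType) (T : normedModType R) d
    (M : measurableType d) (f : M -> T) (m : {measure set M -> \bar R}) :
  finite_measure_balls f m ->
  finite_measure_balls (fun x : M * measurableTypeR R => (f x.1, x.2) : T * R)
    (m \x lebesgue_measure)%E.
Proof.
move=> fin r; have [K [cK rK mK fK]] := fin r.
have [L [cL rL mL fL]] := finite_measure_balls_R r.
exists (K `*` L); split.
- exact: compact_setX.
- by move=> x /=; rewrite prod_normE ge_max => /andP[/rK xK /rL xL].
- exact: (measurableX mK mL).
- rewrite -[X in (X < _)%E]/((m \x lebesgue_measure)%E (f @^-1` K `*` id @^-1` L)).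
  rewrite product_measure1E //.
  by apply: lte_mul_pinfty => //; rewrite ge0_fin_numE // measure_ge0.
Qed.

Lemma bounded_set_subset_ball (R : realType) (V : normedModType R) (A : set V) :
  bounded_set A -> exists r : R, A `<=` [set x | `|x| <= r].
Proof.
move=> [M [Mr HM]]; exists (`|M| + 1); apply: HM.
by rewrite (le_lt_trans (real_ler_norm Mr)) // ltrDl.
Qed.

Lemma Rd_measurability (R : realType) (d : nat) : d = 2%N \/ d = 3%N ->
  open_measurable_map (@stoV R (Rd R d)) /\
  finite_measure_balls (@stoV R (Rd R d)) (@smu R (Rd R d)).
Proof.
have base := measurable_base_rat_itv R; have balls := @finite_measure_balls_R R.
case=> ->.
  have -> : @stoV R (Rd R 2) = fun x => (x.1, x.2) by apply: funext => -[].
  split; first exact: open_measurable_of_base (measurable_base_prod base base).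
  exact: finite_measure_balls_prodR balls.
have -> : @stoV R (Rd R 3) = fun x => ((x.1.1, x.1.2), x.2) by apply: funext => -[[]].
split; first exact: open_measurable_of_base
  (measurable_base_prod (measurable_base_prod base base) base).
exact: finite_measure_balls_prodR (finite_measure_balls_prodR balls).
Qed.

Section ComplexParts.
Variables (R : realType) (T : Type).

Definition ccomb (c1 c2 : R[i]) (u v : T -> R[i]) : T -> R[i] :=
  fun x => c1 * u x + c2 * v x.

(* A pair predicate also covers relations such as "f' is the derivative of f". *)
Definition real_lin_closed (P : (T -> R) -> (T -> R) -> Prop) :=
  forall a b f f' g g', P f f' -> P g g' ->
    P (fun x => a * f x + b * g x) (fun x => a * f' x + b * g' x).

Lemma ccomb_parts (P : (T -> R) -> (T -> R) -> Prop) c1 c2 u u' v v' :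
  real_lin_closed P ->
  P (fun x => Re (u x)) (fun x => Re (u' x)) ->
  P (fun x => Im (u x)) (fun x => Im (u' x)) ->
  P (fun x => Re (v x)) (fun x => Re (v' x)) ->
  P (fun x => Im (v x)) (fun x => Im (v' x)) ->
  P (fun x => Re (ccomb c1 c2 u v x)) (fun x => Re (ccomb c1 c2 u' v' x)) /\
  P (fun x => Im (ccomb c1 c2 u v x)) (fun x => Im (ccomb c1 c2 u' v' x)).
Proof.
move=> Plin Pur Pui Pvr Pvi.
have ReE k1 k2 w w' : (fun x => Re (ccomb k1 k2 w w' x)) = fun x =>
    1 * (Re k1 * Re (w x) + (- Im k1) * Im (w x)) +
    1 * (Re k2 * Re (w' x) + (- Im k2) * Im (w' x)).
  apply: funext => x; rewrite /ccomb.
  by case: k1 k2 (w x) (w' x) => [? ?] [? ?] [? ?] [? ?] /=; ring.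
have ImE k1 k2 w w' : (fun x => Im (ccomb k1 k2 w w' x)) = fun x =>
    1 * (Im k1 * Re (w x) + Re k1 * Im (w x)) +
    1 * (Im k2 * Re (w' x) + Re k2 * Im (w' x)).
  apply: funext => x; rewrite /ccomb.
  by case: k1 k2 (w x) (w' x) => [? ?] [? ?] [? ?] [? ?] /=; ring.
by rewrite !ReE !ImE; split; apply: (Plin); apply: (Plin).
Qed.

Lemma abs2_ge0 (z : R[i]) : 0 <= abs2 z.
Proof. by rewrite /abs2 addr_ge0 ?sqr_ge0. Qed.

Lemma abs2_ccombB_le (c1 c2 p q p' q' : R[i]) :
  abs2 (c1 * p + c2 * q - (c1 * p' + c2 * q')) <=
  2 * abs2 c1 * abs2 (p - p') + 2 * abs2 c2 * abs2 (q - q').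
Proof.
have -> : c1 * p + c2 * q - (c1 * p' + c2 * q') = c1 * (p - p') + c2 * (q - q').
  by ring.
move: (p - p') (q - q') => [r s] [t u]; case: c1 c2 => [a b] [c d]; rewrite /abs2 /= -!mulrA.
set x1 := a * r - b * s; set y1 := a * s + b * r.
set x2 := c * t - d * u; set y2 := c * u + d * t.
have -> : (a ^+ 2 + b ^+ 2) * (r ^+ 2 + s ^+ 2) = x1 ^+ 2 + y1 ^+ 2 by rewrite /x1 /y1; ring.
have -> : (c ^+ 2 + d ^+ 2) * (t ^+ 2 + u ^+ 2) = x2 ^+ 2 + y2 ^+ 2 by rewrite /x2 /y2; ring.
by have := sqr_ge0 (x1 - x2); have := sqr_ge0 (y1 - y2); nra.
Qed.

End ComplexParts.

Section SameKernel.
Variables (F : fieldType) (X : Type) (T : set X) (axpy : F -> X -> X -> X).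
Variables (f l : X -> F).
Hypothesis T_axpy : forall a x y, T x -> T y -> T (axpy a x y).
Hypothesis f_axpy : forall a x y, T x -> T y -> f (axpy a x y) = a * f x + f y.
Hypothesis l_axpy : forall a x y, T x -> T y -> l (axpy a x y) = a * l x + l y.

Lemma same_kernel_proportional v : T v -> l v != 0 ->
  (forall z, T z -> f z = 0 <-> l z = 0) <->
  exists s, s != 0 /\ forall z, T z -> f z = s * l z.
Proof.
move=> Tv lv0; split=> [ker|[s [s0 fsl]] z Tz]; last first.
  rewrite fsl //; split=> [/eqP|->]; last by rewrite mulr0.
  by rewrite mulf_eq0 (negbTE s0) => /eqP.
have fv0 : f v != 0 by apply: contra lv0 => /eqP/(ker v Tv)->.
exists (f v / l v); split=> [|z Tz]; first by rewrite mulf_neq0 ?invr_eq0.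
(* [z - (l z / l v) v] lies in the common kernel. *)
have Tw : T (axpy (- (l z / l v)) v z) by exact: T_axpy.
have /(ker _ Tw) : l (axpy (- (l z / l v)) v z) = 0 by rewrite l_axpy //; field.
rewrite f_axpy // => fw.
by rewrite -[f z]subr0 -fw; field.
Qed.

End SameKernel.

Section Single.
Variables (I : eqType) (X : Type) (x0 : X).

Definition single (j : I) (z : X) : I -> X := fun k => if k == j then z else x0.

Lemma forall_single (P : I -> X -> Prop) j z : (forall k, P k x0) ->
  (forall k, P k (single j z k)) <-> P j z.
Proof.
move=> P0; split=> [/(_ j)|Pz k]; first by rewrite /single eqxx.
by rewrite /single; case: eqP => [->|].
Qed.

End Single.

Section Pairing.
Variables (R : realType) (E : euclid R) (D : set (sV E)).
Variable b : (sV E -> R[i]) -> (sV E -> R[i]) -> R.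
Hypothesis hb : op_H10_Hm1 D b.

Let neg1_plus (u : sV E -> R[i]) : (fun x => ((-1)%:C)%C * u x + u x) = fun=> 0.
Proof. by apply: funext => x; case: (u x) => ? ? /=; congr Complex; ring. Qed.

Lemma pairing0r y : H10 D y -> b y (fun=> 0) = 0.
Proof.
by move=> Hy; rewrite -(neg1_plus y) (hb.2.2 y Hy).1 // mulN1r addNr.
Qed.

Lemma pairing0l z : H10 D z -> b (fun=> 0) z = 0.
Proof. by move=> Hz; rewrite -(neg1_plus z) hb.2.1 // mulN1r addNr. Qed.

End Pairing.

Section Domain.
Variables (R : realType) (E : euclid R) (D : set (sV E)) (K : set (sV E)).
Local Notation V := (sV E).
Local Notation mu := (@smu R E).
Local Notation toV := (@stoV R E).

Hypothesis toV_open_measurable : open_measurable_map toV.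
Hypothesis openD : open D.
Hypothesis compactK : compact K.
Hypothesis subDK : D `<=` K.
Hypothesis finite_onD : (mu (onD D) < +oo)%E.

Let measurable_onD : measurable (onD D) := toV_open_measurable openD.

Definition rintegrable (f : V -> R) := mu.-integrable (onD D) (EFin \o (f \o toV)).

Definition sqr_integrable (f : V -> R) :=
  measurable_fun (onD D) (f \o toV) /\ rintegrable (fun x => f x ^+ 2).

Lemma rintegrable_cst (k : R) : rintegrable (fun=> k).
Proof.
apply/integrableP; split; first exact/measurable_EFinP/measurable_cst.
rewrite (eq_integral (fun=> `|k|%:E)) // integral_cst //.
exact: lte_mul_pinfty.
Qed.

Lemma rintegrable_lin (a b : R) f g : rintegrable f -> rintegrable g ->
  rintegrable (fun x => a * f x + b * g x).
Proof.
move=> If Ig.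
have := integrableD measurable_onD (integrableZl measurable_onD a If)
  (integrableZl measurable_onD b Ig).
by apply: eq_integrable => // x _ /=; rewrite EFinD !EFinM.
Qed.

Lemma rintegrable_le (f g : V -> R) : measurable_fun (onD D) (f \o toV) ->
  rintegrable g -> (forall x, D x -> `|f x| <= g x) -> rintegrable f.
Proof.
move=> mf Ig fg; apply: (le_integrable measurable_onD _ _ Ig).
  exact/measurable_EFinP.
by move=> x Dx /=; rewrite lee_fin (le_trans (fg _ Dx)) ?ler_norm.
Qed.

Lemma rintegrable_nonnegE (f : V -> R) : (forall x, 0 <= f x) ->
  rintegrable f <-> measurable_fun (onD D) (f \o toV) /\ (eint D f < +oo)%E.
Proof.
move=> f0; have -> : eint D f = (\int[mu]_(x in onD D) `|(f (toV x))%:E|)%E.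
  by apply: eq_integral => x _; rewrite gee0_abs ?lee_fin.
by split=> [/integrableP[/measurable_EFinP]|[/measurable_EFinP mf fi]];
  last exact/integrableP.
Qed.

Lemma rint_lin (a b : R) f g : rintegrable f -> rintegrable g ->
  rint D (fun x => a * f x + b * g x) = a * rint D f + b * rint D g.
Proof.
move=> If Ig; rewrite /rint (RintegralD measurable_onD).
- by rewrite (RintegralZl _ measurable_onD If) (RintegralZl _ measurable_onD Ig).
- by apply: eq_integrable (integrableZl measurable_onD a If) => // x _ /=; rewrite EFinM.
- by apply: eq_integrable (integrableZl measurable_onD b Ig) => // x _ /=; rewrite EFinM.
Qed.

Lemma rint0 : rint D (fun=> 0) = 0.
Proof. by rewrite /rint Rintegral_cst // mul0r. Qed.

Lemma rintegrable_mul f g : sqr_integrable f -> sqr_integrable g ->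
  rintegrable (fun x => f x * g x).
Proof.
move=> [mf If] [mg Ig]; apply: (rintegrable_le _ (rintegrable_lin 1 1 If Ig)) => [|x _].
  exact: measurable_funM.
rewrite !mul1r normrM -[f x ^+ 2]real_normK ?num_real // -[g x ^+ 2]real_normK ?num_real //.
by have := sqr_ge0 (`|f x| - `|g x|); nra.
Qed.

Lemma sqr_integrable_lin (a b : R) f g : sqr_integrable f -> sqr_integrable g ->
  sqr_integrable (fun x => a * f x + b * g x).
Proof.
move=> [mf If] [mg Ig].
have mfg : measurable_fun (onD D) ((fun x => a * f x + b * g x) \o toV).
  by apply: measurable_funD; apply: measurable_funM => //; exact: measurable_cst.
split => //.
apply: (rintegrable_le _ (rintegrable_lin (2 * a ^+ 2) (2 * b ^+ 2) If Ig)) => [|x _].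
  exact: measurable_funX.
by rewrite ger0_norm ?sqr_ge0 //; have := sqr_ge0 (a * f x - b * g x); nra.
Qed.

Lemma continuous_measurable_onD (f : V -> R) : continuous f ->
  measurable_fun (onD D) (f \o toV).
Proof.
move=> /continuousP cf; apply: (measurability _ (RGenOpens.measurableE R)).
move=> _ [_ [a [b ->] <-]].
rewrite (_ : _ `&` _ = onD (D `&` f @^-1` `]a, b[)) //.
by apply/toV_open_measurable/openI => //; apply/cf/interval_open.
Qed.

Lemma continuous_sqr_integrable (f : V -> R) : continuous f -> sqr_integrable f.
Proof.
move=> cf; have mf := continuous_measurable_onD cf.
have [M fM] : exists M, forall x, K x -> `|f x| <= M.
  have [M fKM] := bounded_set_subset_ball
    (compact_bounded (continuous_compact (continuous_subspaceT cf) compactK)).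
  by exists M => x Kx; apply: fKM; exists x.
split => //; apply: (rintegrable_le _ (rintegrable_cst (M ^+ 2))) => [|x Dx].
  exact: measurable_funX.
rewrite ger0_norm ?sqr_ge0 // -real_normK ?num_real //.
by have := fM x (subDK Dx); have := normr_ge0 (f x); nra.
Qed.

Lemma L2E u :
  L2 D u <-> sqr_integrable (fun x => Re (u x)) /\ sqr_integrable (fun x => Im (u x)).
Proof.
have u0 x := abs2_ge0 (u x).
split=> [[mr [mi fin]]|[[mr Ir] [mi Ii]]].
  have Iu : rintegrable (fun x => abs2 (u x)).
    by apply/rintegrable_nonnegE => //; split => //; apply: measurable_funD; exact: measurable_funX.
  split; split=> //; apply: (rintegrable_le _ Iu) => [|x _].
  - exact: measurable_funX.
  - by rewrite ger0_norm ?sqr_ge0 // lerDl sqr_ge0.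
  - exact: measurable_funX.
  - by rewrite ger0_norm ?sqr_ge0 // lerDr sqr_ge0.
have := rintegrable_lin 1 1 Ir Ii.
by under eq_fun do rewrite !mul1r; move=> /rintegrable_nonnegE[] // _ fin.
Qed.

Lemma L2_ccomb c1 c2 u v : L2 D u -> L2 D v -> L2 D (ccomb c1 c2 u v).
Proof.
move=> /L2E[ur ui] /L2E[vr vi]; apply/L2E.
by apply: (ccomb_parts (P := fun f _ => sqr_integrable f)) => // a b f _ g _;
  exact: sqr_integrable_lin.
Qed.

Lemma continuous_L2 u : continuous (fun x => Re (u x)) ->
  continuous (fun x => Im (u x)) -> L2 D u.
Proof. by move=> cr ci; apply/L2E; split; exact: continuous_sqr_integrable. Qed.

Lemma measurable_abs2B u v : L2 D u -> L2 D v ->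
  measurable_fun (onD D) ((fun x => abs2 (u x - v x)) \o toV).
Proof.
move=> Lu Lv; have /L2E[[mr _] [mi _]] := L2_ccomb 1 (-1) Lu Lv.
rewrite (_ : _ \o _ = fun x => Re (ccomb 1 (-1) u v (toV x)) ^+ 2 +
                                Im (ccomb 1 (-1) u v (toV x)) ^+ 2).
  by apply: measurable_funD; exact: measurable_funX.
by apply: funext => x; rewrite /ccomb mul1r mulN1r.
Qed.

Lemma eint_ge0 (f : V -> R) : (forall x, 0 <= f x) -> (0 <= eint D f)%E.
Proof. by move=> f0; apply: integral_ge0 => x _; rewrite lee_fin. Qed.

Lemma eint_le_lin (F G H : V -> R) (k1 k2 : R) : 0 <= k1 -> 0 <= k2 ->
  (forall x, 0 <= G x) -> (forall x, 0 <= H x) ->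
  measurable_fun (onD D) (F \o toV) -> measurable_fun (onD D) (G \o toV) ->
  measurable_fun (onD D) (H \o toV) ->
  (forall x, 0 <= F x <= k1 * G x + k2 * H x) ->
  (eint D F <= k1%:E * eint D G + k2%:E * eint D H)%E.
Proof.
move=> k10 k20 G0 H0 mF mG mH FGH.
have mkG : measurable_fun (onD D) (fun x => k1 * G (toV x)).
  by apply: measurable_funM => //; exact: measurable_cst.
have mkH : measurable_fun (onD D) (fun x => k2 * H (toV x)).
  by apply: measurable_funM => //; exact: measurable_cst.
apply: (@le_trans _ _ (eint D (fun x => k1 * G x + k2 * H x))).
  apply: ge0_le_integral => //.
  - by move=> x _; rewrite lee_fin; case/andP: (FGH (toV x)).
  - exact/measurable_EFinP.
  - by apply/measurable_EFinP; exact: measurable_funD.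
  - by move=> x _; rewrite lee_fin; case/andP: (FGH (toV x)).
rewrite /eint (eq_integral (fun x => (k1 * G (toV x))%:E + (k2 * H (toV x))%:E)%E) //.
rewrite ge0_integralD //; last 4 first.
- by move=> x _; rewrite lee_fin mulr_ge0.
- exact/measurable_EFinP.
- by move=> x _; rewrite lee_fin mulr_ge0.
- exact/measurable_EFinP.
by rewrite -!ge0_integralZl //; (exact/measurable_EFinP || by move=> x _; rewrite lee_fin).
Qed.

Lemma eint_ccombB_le c1 c2 a b u v : L2 D a -> L2 D b -> L2 D u -> L2 D v ->
  (eint D (fun x => abs2 (ccomb c1 c2 a b x - ccomb c1 c2 u v x)%R) <=
   (2 * abs2 c1)%:E * eint D (fun x => abs2 (a x - u x)%R) +
   (2 * abs2 c2)%:E * eint D (fun x => abs2 (b x - v x)%R))%E.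
Proof.
move=> La Lb Lu Lv; apply: eint_le_lin => //.
- by rewrite mulr_ge0 ?abs2_ge0.
- by rewrite mulr_ge0 ?abs2_ge0.
- by move=> x; exact: abs2_ge0.
- by move=> x; exact: abs2_ge0.
- by apply: measurable_abs2B; exact: L2_ccomb.
- exact: measurable_abs2B.
- exact: measurable_abs2B.
- by move=> x; rewrite abs2_ge0 /ccomb abs2_ccombB_le.
Qed.

Lemma H1dist2_ge0 u w v wv : (0 <= H1dist2 D u w v wv)%E.
Proof.
apply: adde_ge0; first by apply: eint_ge0 => x; exact: abs2_ge0.
by apply: sume_ge0 => k _; apply: eint_ge0 => x; exact: abs2_ge0.
Qed.

Lemma H1dist2_ccomb_le c1 c2 a b wa wb u v wu wv :
  L2 D a -> L2 D b -> L2 D u -> L2 D v ->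
  (forall k, L2 D (wa k)) -> (forall k, L2 D (wb k)) ->
  (forall k, L2 D (wu k)) -> (forall k, L2 D (wv k)) ->
  (H1dist2 D (ccomb c1 c2 a b) (fun k => ccomb c1 c2 (wa k) (wb k))
     (ccomb c1 c2 u v) (fun k => ccomb c1 c2 (wu k) (wv k)) <=
   (2 * abs2 c1)%:E * H1dist2 D a wa u wu + (2 * abs2 c2)%:E * H1dist2 D b wb v wv)%E.
Proof.
move=> La Lb Lu Lv Lwa Lwb Lwu Lwv; rewrite /H1dist2.
apply: le_trans.
  apply: leeD; first exact: eint_ccombB_le.
  by apply: lee_sum => k _; exact: eint_ccombB_le.
have dist_ge0 (f g : V -> R[i]) : (0 <= eint D (fun x => abs2 (f x - g x)%R))%E.
  by apply: eint_ge0 => x; exact: abs2_ge0.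
rewrite big_split /= -!ge0_sume_distrr; try by move=> k _; exact: dist_ge0.
rewrite (ge0_muleDr _ (dist_ge0 _ _)); last by apply: sume_ge0 => k _; exact: dist_ge0.
rewrite (ge0_muleDr _ (dist_ge0 _ _)); last by apply: sume_ge0 => k _; exact: dist_ge0.
by rewrite addeACA.
Qed.

Local Notation e := (@sbasis R E).

Lemma derive_lin_closed k :
  real_lin_closed (fun f f' : V -> R => (forall x, derivable f x (e k)) /\ 'D_(e k) f = f').
Proof.
move=> a b f f' g g' [df <-] [dg <-]; split=> [x|].
  by apply: derivableD; exact: derivableZ.
by apply: funext => x; rewrite deriveD ?deriveZ //; exact: derivableZ.
Qed.

Lemma pder_lin (a b : R) (f g : V -> R) (l : seq 'I_(@sdim1 R E).+1) :
  smooth f -> smooth g ->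
  pder l (fun x => a * f x + b * g x) = fun x => a * pder l f x + b * pder l g x.
Proof.
move=> sf sg; elim: l => [//|k l IH] /=; rewrite IH.
have [df dg] := ((sf l).2 k, (sg l).2 k).
by have [] := derive_lin_closed a b (conj df erefl) (conj dg erefl).
Qed.

Lemma smooth_lin (a b : R) (f g : V -> R) :
  smooth f -> smooth g -> smooth (fun x => a * f x + b * g x).
Proof.
move=> sf sg l; rewrite pder_lin //; have [cf df] := sf l; have [cg dg] := sg l.
split=> [x|k x]; last by apply: derivableD; exact: derivableZ.
exact: (continuousD (continuousM (@cst_continuous _ _ a x) (cf x))
  (continuousM (@cst_continuous _ _ b x) (cg x))).
Qed.

Lemma ctest_ccomb c1 c2 u v : ctest D u -> ctest D v -> ctest D (ccomb c1 c2 u v).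
Proof.
move=> [ur [ui [cu su]]] [vr [vi [cv sv]]].
have [sr si] := ccomb_parts (P := fun f _ => smooth f) c1 c2 (u' := u) (v' := v)
  (fun a b f _ g _ => @smooth_lin a b f g) ur ui vr vi.
do 2!split=> //.
have supp : [set x | ccomb c1 c2 u v x != 0] `<=`
    [set x | u x != 0] `|` [set x | v x != 0].
  move=> x /=; apply: contraPP => /not_orP[/negP/negPn/eqP u0 /negP/negPn/eqP v0].
  by rewrite /ccomb u0 v0 !mulr0 addr0 eqxx.
have csupp := closure_subset supp; rewrite closureU in csupp.
split; last by move=> x /csupp[/su|/sv].
exact: subclosed_compact (@closed_closure _ _) (compactU cu cv) csupp.
Qed.

Lemma cpder_ccomb k c1 c2 u v : ctest D u -> ctest D v ->
  cpder k (ccomb c1 c2 u v) = ccomb c1 c2 (cpder k u) (cpder k v).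
Proof.
move=> [ur [ui _]] [vr [vi _]].
have D_parts w : smooth (fun x => Re (w x)) -> smooth (fun x => Im (w x)) ->
    ((forall x, derivable (fun x => Re (w x)) x (e k)) /\
     'D_(e k) (fun x => Re (w x)) = fun x => Re (cpder k w x)) /\
    ((forall x, derivable (fun x => Im (w x)) x (e k)) /\
     'D_(e k) (fun x => Im (w x)) = fun x => Im (cpder k w x)).
  by move=> wr wi; split; split=> // x; [exact: (wr [::]).2|exact: (wi [::]).2].
have [[ur' ui'] [vr' vi']] := (D_parts _ ur ui, D_parts _ vr vi).
have [[_ Dr] [_ Di]] := ccomb_parts c1 c2 (derive_lin_closed (k := k)) ur' ui' vr' vi'.
apply: funext => x; apply/eqP; rewrite eq_complex; apply/andP; split; apply/eqP.
- exact: (congr1 (fun f => f x) Dr).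
- exact: (congr1 (fun f => f x) Di).
Qed.

Lemma ctest_L2 u : ctest D u -> L2 D u.
Proof. by move=> [ur [ui _]]; apply: continuous_L2; [exact: (ur [::]).1|exact: (ui [::]).1]. Qed.

Lemma cpder_L2 k u : ctest D u -> L2 D (cpder k u).
Proof.
by move=> [ur [ui _]]; apply: continuous_L2; [exact: (ur [:: k]).1|exact: (ui [:: k]).1].
Qed.

Lemma ibp_lin_closed (h1 h2 : V -> R) : sqr_integrable h1 -> sqr_integrable h2 ->
  real_lin_closed (fun f g => [/\ sqr_integrable f, sqr_integrable g &
    rint D (fun x => f x * h1 x) = - rint D (fun x => g x * h2 x)]).
Proof.
move=> S1 S2 a b f f' g g' [Sf Sf' ef] [Sg Sg' eg].
split; try exact: sqr_integrable_lin.
have distr (F G h : V -> R) :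
    (fun x => (a * F x + b * G x) * h x) = fun x => a * (F x * h x) + b * (G x * h x).
  by apply: funext => x; ring.
rewrite !distr !rint_lin ?ef ?eg; try exact: rintegrable_mul.
by ring.
Qed.

Lemma weak_grad_ccomb c1 c2 u v wu wv : L2 D u -> L2 D v ->
  weak_grad D u wu -> weak_grad D v wv ->
  weak_grad D (ccomb c1 c2 u v) (fun k => ccomb c1 c2 (wu k) (wv k)).
Proof.
move=> Lu Lv gu gv k; have [Lwu pu] := gu k; have [Lwv pv] := gv k.
split=> [|psi tpsi]; first exact: L2_ccomb.
have [[cpsi _] [cDpsi _]] := (tpsi.1 [::], tpsi.1 [:: k]).
have ibp_parts w ww : L2 D w -> L2 D ww -> weak_partial D k w ww ->
    let P := fun f g => [/\ sqr_integrable f, sqr_integrable g &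
      rint D (fun x => f x * 'D_(e k) psi x) = - rint D (fun x => g x * psi x)] in
    P (fun x => Re (w x)) (fun x => Re (ww x)) /\ P (fun x => Im (w x)) (fun x => Im (ww x)).
  move=> /L2E[wr wi] /L2E[wwr wwi] /(_ psi tpsi)[er ei]; by split; split.
have [ur ui] := ibp_parts _ _ Lu Lwu pu; have [vr vi] := ibp_parts _ _ Lv Lwv pv.
have ibp := ibp_lin_closed (continuous_sqr_integrable cDpsi) (continuous_sqr_integrable cpsi).
by have [[_ _ ?] [_ _ ?]] := ccomb_parts c1 c2 ibp ur ui vr vi.
Qed.

Lemma H10_ccomb c1 c2 u v : H10 D u -> H10 D v -> H10 D (ccomb c1 c2 u v).
Proof.
move=> [Lu [wu [gu [psu [tpsu cvu]]]]] [Lv [wv [gv [psv [tpsv cvv]]]]].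
split; first exact: L2_ccomb.
exists (fun k => ccomb c1 c2 (wu k) (wv k)); split; first exact: weak_grad_ccomb.
exists (fun n => ccomb c1 c2 (psu n) (psv n)); split=> [n|]; first exact: ctest_ccomb.
pose d1 n := H1dist2 D (psu n) (fun k => cpder k (psu n)) u wu.
pose d2 n := H1dist2 D (psv n) (fun k => cpder k (psv n)) v wv.
have bound_cvg :
    (fun n => (2 * abs2 c1)%:E * d1 n + (2 * abs2 c2)%:E * d2 n)%E @ \oo --> 0%E.
  have -> : 0%E = ((2 * abs2 c1)%:E * 0 + (2 * abs2 c2)%:E * 0)%E by rewrite !mule0 adde0.
  by apply: cvgeD; [rewrite !mule0|exact: cvgeZl|exact: cvgeZl].
apply: squeeze_cvge (cvg_cst 0%E) bound_cvg; apply: filterE => n.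
rewrite H1dist2_ge0 /= /d1 /d2.
under [X in H1dist2 _ _ X _ _]eq_fun do rewrite cpder_ccomb //.
by apply: H1dist2_ccomb_le => // [||k|k|k|k];
  [exact: ctest_L2|exact: ctest_L2|exact: cpder_L2|exact: cpder_L2|exact: (gu k).1|exact: (gv k).1].
Qed.

Lemma rintegrable_ReMc u v : L2 D u -> L2 D v ->
  rintegrable (fun x => Re (u x * (v x)^*)).
Proof.
move=> /L2E[ur ui] /L2E[vr vi].
have := rintegrable_lin 1 1 (rintegrable_mul ur vr) (rintegrable_mul ui vi).
by apply: eq_integrable => // x _ /=; case: (u _) (v _) => [? ?] [? ?] /=; congr EFin; ring.
Qed.

Lemma L2re_linl (a : R) u v w : L2 D u -> L2 D v -> L2 D w ->
  L2re D (fun x => (a%:C)%C * u x + v x) w = a * L2re D u w + L2re D v w.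
Proof.
move=> Lu Lv Lw; rewrite -[L2re D v w]mul1r /L2re /= -rint_lin; try exact: rintegrable_ReMc.
congr rint; apply: funext => x.
by case: (u x) (v x) (w x) => [? ?] [? ?] [? ?] /=; ring.
Qed.

Lemma L2re_linr (a : R) u v w : L2 D u -> L2 D v -> L2 D w ->
  L2re D u (fun x => (a%:C)%C * v x + w x) = a * L2re D u v + L2re D u w.
Proof.
move=> Lu Lv Lw; rewrite -[L2re D u w]mul1r /L2re /= -rint_lin; try exact: rintegrable_ReMc.
congr rint; apply: funext => x.
by case: (u x) (v x) (w x) => [? ?] [? ?] [? ?] /=; ring.
Qed.

Lemma rintN f : rintegrable f -> rint D (fun x => - f x) = - rint D f.
Proof.
move=> If; rewrite -[RHS]addr0 -(mul0r (rint D f)) -mulN1r -rint_lin //.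
by congr rint; apply: funext => x; ring.
Qed.

Lemma imulE (u : V -> R[i]) : imul u = ccomb 'i 0 u u.
Proof. by apply: funext => x; rewrite /ccomb mul0r addr0. Qed.

Lemma cint_mulc_eq0 u z : L2 D u -> L2 D z ->
  cint D (fun x => u x * (z x)^*) = 0 <-> L2re D z u = 0 /\ L2re D (imul u) z = 0.
Proof.
move=> Lu Lz.
have ReE : rint D (fun x => Re (u x * (z x)^*)) = L2re D z u.
  by congr rint; apply: funext => x; case: (u x) (z x) => [? ?] [? ?] /=; ring.
have ImE : rint D (fun x => Im (u x * (z x)^*)) = - L2re D (imul u) z.
  rewrite -rintN; last by apply: rintegrable_ReMc => //; by rewrite imulE; exact: L2_ccomb.
  by congr rint; apply: funext => x; rewrite /imul; case: (u x) (z x) => [? ?] [? ?] /=; ring.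
rewrite /cint ReE ImE; split=> [/eqP|[-> ->]]; last by rewrite oppr0.
by rewrite eq_complex /= oppr_eq0 => /andP[/eqP ? /eqP ?].
Qed.

Lemma H10_axpy (a : R) z w : H10 D z -> H10 D w -> H10 D (fun x => (a%:C)%C * z x + w x).
Proof.
move=> Hz Hw; have := H10_ccomb (a%:C)%C 1 Hz Hw.
by congr H10; apply: funext => x; rewrite /ccomb mul1r.
Qed.

Lemma H10_imul u : H10 D u -> H10 D (imul u).
Proof. by move=> Hu; rewrite imulE; exact: H10_ccomb. Qed.

Lemma H10_zero u : H10 D u -> H10 D (fun=> 0).
Proof.
move=> Hu; have := H10_ccomb 0 0 Hu Hu.
by congr H10; apply: funext => x; rewrite /ccomb !mul0r addr0.
Qed.

Lemma L2re0r u : L2re D u (fun=> 0) = 0.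
Proof. by rewrite -rint0; congr rint; apply: funext => x /=; rewrite conjC0 mulr0. Qed.

Section Horizontal.
Variables (p : nat) (N : 'I_p -> R) (phi : 'I_p -> V -> R[i]).
Variable Gpair : 'I_p -> (V -> R[i]) -> (V -> R[i]) -> R.
Hypothesis N_gt0 : forall j, 0 < N j.
Hypothesis phi_oblique : oblique D N phi.
Hypothesis Gpair_op : forall j, op_H10_Hm1 D (Gpair j).
Hypothesis g_riemannian : riemannian_at D (prod_metric Gpair) phi.

Local Notation psi j := (imul (phi j)).
Local Notation zero := (fun=> 0 : R[i]).

Let phi_H10 j : H10 D (phi j) := (phi_oblique j).1.
Let psi_H10 j : H10 D (psi j) := H10_imul (phi_H10 j).

Lemma tangent_axpy j (a : R) z w : tangent_sphere D (phi j) z ->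
  tangent_sphere D (phi j) w -> tangent_sphere D (phi j) (fun x => (a%:C)%C * z x + w x).
Proof.
move=> [Hz tz] [Hw tw]; split; first exact: H10_axpy.
change (L2re D (fun x => (a%:C)%C * z x + w x) (phi j) = 0).
rewrite L2re_linl; [|exact: Hz.1|exact: Hw.1|exact: (phi_H10 j).1].
by rewrite [L2re D z _]tz [L2re D w _]tw mulr0 addr0.
Qed.

Lemma tangent_zero j : tangent_sphere D (phi j) zero.
Proof.
split; first exact: H10_zero (phi_H10 j).
by rewrite -rint0; congr rint; apply: funext => x; rewrite mul0r.
Qed.

Lemma tangent_imul j : tangent_sphere D (phi j) (psi j).
Proof.
split=> //; rewrite -rint0; congr rint; apply: funext => x.
by rewrite /imul; case: (phi j x) => ? ? /=; ring.
Qed.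

Lemma L2re_imul_imul j : L2re D (psi j) (psi j) = N j.
Proof.
rewrite -(phi_oblique j).2; congr rint; apply: funext => x.
by rewrite /imul /abs2; case: (phi j x) => ? ? /=; ring.
Qed.

Lemma tangentOB_single j z : tangent_sphere D (phi j) z -> tangentOB D phi (single zero j z).
Proof.
by move=> tz; apply/(forall_single (P := fun k => tangent_sphere D (phi k))) => //;
  exact: tangent_zero.
Qed.

Lemma prod_metric_single j y z : H10 D y -> H10 D z ->
  prod_metric Gpair (single zero j y) (single zero j z) = Gpair j y z.
Proof.
move=> Hy Hz; rewrite /prod_metric (bigD1 j) //= /single eqxx big1 ?addr0 // => k /negbTE ->.
exact: (pairing0l (Gpair_op k) (H10_zero Hy)).
Qed.

Lemma Gpair_sym j y z : tangent_sphere D (phi j) y -> tangent_sphere D (phi j) z ->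
  Gpair j y z = Gpair j z y.
Proof.
move=> ty tz; rewrite -(prod_metric_single j ty.1 tz.1) -(prod_metric_single j tz.1 ty.1).
by apply: g_riemannian.1; exact: tangentOB_single.
Qed.

Lemma prod_metric_vertical xi (sigma : 'I_p -> R) : (forall k, H10 D (xi k)) ->
  prod_metric Gpair xi (fun k x => 'i * phi k x * ((sigma k)%:C)%C) =
  \sum_(k < p) sigma k * Gpair k (xi k) (psi k).
Proof.
move=> Hxi; apply: eq_bigr => k _.
have -> : (fun x => 'i * phi k x * ((sigma k)%:C)%C) =
    (fun x => ((sigma k)%:C)%C * psi k x + zero x).
  by apply: funext => x; rewrite addr0 mulrC.
have H0 : H10 D zero := H10_zero (Hxi k).
by rewrite ((Gpair_op k).2.2 _ (Hxi k)).1 // (pairing0r (Gpair_op k) (Hxi k)) addr0.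
Qed.

Lemma horizontalE xi : horizontal D (prod_metric Gpair) phi xi <->
  tangentOB D phi xi /\ forall k, Gpair k (psi k) (xi k) = 0.
Proof.
split=> -[t hor]; split=> //; have H10xi k : H10 D (xi k) := (t k).1.
  move=> k; have := hor _ (ex_intro _ (fun i => ((i == k)%:R : R)) erefl).
  rewrite prod_metric_vertical // (bigD1 k) //= eqxx mul1r big1 ?addr0 => [|i /negbTE ->];
    last by rewrite mul0r.
  by rewrite Gpair_sym //; exact: tangent_imul.
move=> _ [sigma ->]; rewrite prod_metric_vertical //; apply: big1 => k _.
by rewrite Gpair_sym ?hor ?mulr0 //; exact: tangent_imul.
Qed.

Lemma horizontalLE xi : horizontalL D phi xi <->
  tangentOB D phi xi /\ forall k, L2re D (psi k) (xi k) = 0.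
Proof.
have phi_L2 k : L2 D (phi k) := (phi_H10 k).1.
split=> [[Hxi c0]|[t L0]].
  have cE k := (cint_mulc_eq0 (phi_L2 k) (Hxi k).1).1 (c0 k).
  by split=> k; [split; [exact: Hxi|exact: (cE k).1]|exact: (cE k).2].
split=> k; first exact: (t k).1.
by apply/(cint_mulc_eq0 (phi_L2 k) (t k).1.1); split; [exact: (t k).2|exact: L0].
Qed.

Lemma horizontal_eqE :
  horizontal D (prod_metric Gpair) phi = horizontalL D phi <->
  forall j z, tangent_sphere D (phi j) z ->
    (Gpair j (psi j) z = 0 <-> L2re D (psi j) z = 0).
Proof.
split=> [hor_eq j z tz|ker_eq]; last first.
  apply/seteqP; split=> xi.
    by move=> /horizontalE[t h]; apply/horizontalLE; split=> // k; apply/ker_eq.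
  by move=> /horizontalLE[t h]; apply/horizontalE; split=> // k; apply/ker_eq.
pose PG k x := Gpair k (psi k) x = 0; pose PL k x := L2re D (psi k) x = 0.
have G0 k : PG k zero := pairing0r (Gpair_op k) (psi_H10 k).
have L0 k : PL k zero := L2re0r _.
have tOB := tangentOB_single tz.
have eqGL := horizontalE (single zero j z); rewrite hor_eq horizontalLE in eqGL.
have singleG := @forall_single _ _ zero PG j z G0.
have singleL := @forall_single _ _ zero PL j z L0.
split=> [/singleG hG|/singleL hL].
  by apply/singleL; case: (eqGL.2 (conj tOB hG)).
by apply/singleG; case: (eqGL.1 (conj tOB hL)).
Qed.

Theorem horizontal_compatible_iff :
  horizontal D (prod_metric Gpair) phi = horizontalL D phi <->
  (forall j : 'I_p, exists varsigma : R, varsigma != 0 /\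
     forall z, tangent_sphere D (phi j) z ->
       Gpair j (imul (phi j)) z = varsigma * L2re D (imul (phi j)) z).
Proof.
rewrite horizontal_eqE.
have psi_nondeg j : L2re D (psi j) (psi j) != 0 by rewrite L2re_imul_imul gt_eqF.
have key j := same_kernel_proportional
  (axpy := fun a z w x => (a%:C)%C * z x + w x) (@tangent_axpy j)
  (fun a y z ty tz => ((Gpair_op j).2.2 _ (psi_H10 j)).1 a y z ty.1 tz.1)
  (fun a y z ty tz => L2re_linr a (psi_H10 j).1 ty.1.1 tz.1.1)
  (tangent_imul j) (psi_nondeg j).
by split=> ker j; apply/key; exact: ker.
Qed.

End Horizontal.

End Domain.

Theorem proposition4p3 (R : realType) (d : nat) (hd : d = 2%N \/ d = 3%N)
  (D : set (sV (Rd R d))) (hD : bounded_lipschitz_domain D)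
  (p : nat) (N : 'I_p -> R) (hN : forall j, 0 < N j)
  (phi : 'I_p -> sV (Rd R d) -> R[i]) (hphi : oblique D N phi)
  (Gpair : 'I_p -> (sV (Rd R d) -> R[i]) -> (sV (Rd R d) -> R[i]) -> R)
  (hG : forall j, op_H10_Hm1 D (Gpair j))
  (hg : riemannian_at D (prod_metric Gpair) phi) :
  horizontal D (prod_metric Gpair) phi = horizontalL D phi <->
  (forall j : 'I_p, exists varsigma : R, varsigma != 0 /\
     forall z, tangent_sphere D (phi j) z ->
       Gpair j (imul (phi j)) z = varsigma * L2re D (imul (phi j)) z).
Proof.
have [openD [_ [_ [/bounded_set_subset_ball[r Dr] _]]]] := hD.
have [toV_open balls] := Rd_measurability R hd.
have [K [compactK rK mK finK]] := balls r.
have subDK : D `<=` K := subset_trans Dr rK.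
have finD : (@smu R (Rd R d) (onD D) < +oo)%E.
  apply: le_lt_trans finK; apply: le_measure; rewrite ?inE //; first exact: toV_open.
  by move=> x /subDK.
exact: (horizontal_compatible_iff toV_open openD compactK subDK finD hN hphi hG hg).
Qed.
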